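(* Fix integers $N\ge 1$, $M\ge 1$, $K\ge 1$, a wavelength $\lambda>0$, a reference path gain $\beta\in(0,1)$, and positive distances $d_{0,a_1}$, $d_{a_K,J+1}$ and $d_{a_k,a_{k+1}}$ ($k=1,\dots,K-1$). Consider a multi-hop reflection route from a base station (BS) with $N$ antennas through $K$ distinct intelligent reflecting surfaces (IRSs) $a_1,\dots,a_K$, each with $M$ reflecting elements, to a single-antenna user, with line-of-sight channels $$\mathbf H_{0,a_1}=\frac{\sqrt\beta}{d_{0,a_1}}e^{-\frac{j2\pi d_{0,a_1}}{\lambda}}\tilde{\mathbf h}_{a_1,2}\tilde{\mathbf h}_{a_1,1}^H\in\mathbb C^{M\times N},$$ $$\mathbf S_{a_k,a_{k+1}}=\frac{\sqrt\beta}{d_{a_k,a_{k+1}}}e^{-\frac{j2\pi d_{a_k,a_{k+1}}}{\lambda}}\tilde{\mathbf s}_{a_k,a_{k+1},2}\tilde{\mathbf s}_{a_k,a_{k+1},1}^H\in\mathbb C^{M\times M}\ (1\le k\le K-1),$$ $$\mathbf g_{a_K,J+1}^H=\frac{\sqrt\beta}{d_{a_K,J+1}}e^{-\frac{j2\pi d_{a_K,J+1}}{\lambda}}\tilde{\mathbf g}_{a_K,J+1}^H\in\mathbb C^{1\times M},$$ where $\tilde{\mathbf h}_{a_1,1}=\mathbf a_B(\vartheta_{0,a_1})$, and $\tilde{\mathbf h}_{a_1,2}$, $\tilde{\mathbf s}_{a_k,a_{k+1},1}$, $\tilde{\mathbf s}_{a_k,a_{k+1},2}$, $\tilde{\mathbf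 g}_{a_K,J+1}$ are IRS array responses $\mathbf a_I(\cdot,\cdot)$ at arbitrary angles (see context). For phase shifts $\theta_{a_k,m}\in\mathbb R$ let $\mathbf\Phi_{a_k}=\mathrm{diag}(e^{j\theta_{a_k,1}},\dots,e^{j\theta_{a_k,M}})$, and for a BS beamformer $\mathbf w_B\in\mathbb C^N$ with $\|\mathbf w_B\|=1$ define the end-to-end channel $$h_{0,J+1}=\mathbf g_{a_K,J+1}^H\mathbf\Phi_{a_K}\mathbf S_{a_{K-1},a_K}\mathbf\Phi_{a_{K-1}}\cdots\mathbf S_{a_1,a_2}\mathbf\Phi_{a_1}\mathbf H_{0,a_1}\mathbf w_B$$ (for $K=1$: $h_{0,J+1}=\mathbf g_{a_1,J+1}^H\mathbf\Phi_{a_1}\mathbf H_{0,a_1}\mathbf w_B$). Then the maximum of $|h_{0,J+1}|^2$ over all phase shifts $\{\theta_{a_k,m}\}$ and all unit-norm $\mathbf w_B$ equals $$M^{2K}N\kappa^2=\frac{M^{2K}N\beta^{K+1}}{d_{0,a_1}^2\,d_{a_K,J+1}^2\prod_{k=1}^{K-1}d_{a_k,a_{k+1}}^2},\qquad \kappa=\frac{(\sqrt\beta)^{K+1}}{d_{0,a_1}d_{a_K,J+1}\prod_{k=1}^{K-1}d_{a_k,a_{k+1}}},$$ and it is attained by $\mathbf w_B=e^{\frac{j2\pi D}{\lambda}}\tilde{\mathbf h}_{a_1,1}/\|\tilde{\mathbf h}_{a_1,1}\|$ with $D=d_{0,a_1}+d_{a_K,J+1}+\sum_{k=1}^{K-1}d_{a_k,a_{k+1}}$,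 and, for each $m\in\{1,\dots,M\}$, $\theta_{a_k,m}=\angle(\mathbf y_k)_m-\angle(\mathbf x_k)_m$, where the incoming vector is $\mathbf x_1=\tilde{\mathbf h}_{a_1,2}$ and $\mathbf x_k=\tilde{\mathbf s}_{a_{k-1},a_k,2}$ for $k\ge2$, and the outgoing vector is $\mathbf y_k=\tilde{\mathbf s}_{a_k,a_{k+1},1}$ for $k\le K-1$ and $\mathbf y_K=\tilde{\mathbf g}_{a_K,J+1}$.
   Context: $j$ denotes the imaginary unit; $\angle s$ is the phase of a complex number $s$ and $(\mathbf v)_m$ the $m$-th entry of a vector. The BS array response (uniform linear array with antenna spacing $d_A$) is $\mathbf a_B(\vartheta)\in\mathbb C^N$ with $(\mathbf a_B(\vartheta))_n=e^{-j2\pi(n-1)d_A\sin\vartheta/\lambda}$. Each IRS is a uniform rectangular array with $M=M_1M_2$ elements and element spacing $d_I$, with array response $\mathbf a_I(\vartheta^a,\vartheta^e)\in\mathbb C^M$, $(\mathbf a_I(\vartheta^a,\vartheta^e))_m=e^{-j2\pi d_I(\lfloor\frac{m-1}{M_1}\rfloor\sin\vartheta^e\cos\vartheta^a+(m-1-\lfloor\frac{m-1}{M_1}\rfloor M_1)\cos\vartheta^e)/\lambda}$, where $\vartheta^a,\vartheta^e$ are azimuth/elevation angles of arrival or departure. The vectors $\tilde{\mathbf h}_{a_1,2}$ (arrival at IRS $a_1$ from the BS), $\tilde{\mathbf s}_{a_k,a_{k+1},1}$ (departure from IRS $a_k$ toward IRS $a_{k+1}$), $\tilde{\mathbf s}_{a_k,a_{k+1},2}$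 (arrival at IRS $a_{k+1}$ from IRS $a_k$), and $\tilde{\mathbf g}_{a_K,J+1}$ (departure from IRS $a_K$ toward the user) are each of the form $\mathbf a_I(\vartheta^a,\vartheta^e)$ for some (arbitrary) angles. *)

From HB Require Import structures.
From mathcomp Require Import all_boot all_order all_algebra.
From mathcomp Require Import all_classical all_reals.
From mathcomp Require Import trigo.
From mathcomp Require Import complex.
Set Implicit Arguments. Unset Strict Implicit. Unset Printing Implicit Defensive.
Import Order.TTheory GRing.Theory Num.Theory.
Local Open Scope ring_scope.
Local Open Scope complex_scope.

Section Defs.
Variable R : realType.
Local Notation C := R[i].

Definition expi (t : R) : C := cos t +i* sin t.

Definition sqnorm (z : C) : R := complex.Re z ^+ 2 + complex.Im z ^+ 2.

Definition vnorm n (v : 'cV[C]_n) : R := Num.sqrt (\sum_(i < n) sqnorm (v i 0)).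

Definition carg (z : C) : R :=
  let r := Num.sqrt (sqnorm z) in
  if 0 <= complex.Im z then acos (complex.Re z / r) else - acos (complex.Re z / r).

Definition adjmx m n (A : 'M[C]_(m, n)) : 'M[C]_(n, m) :=
  \matrix_(i, j) conjc (A j i).

(* BS ULA response a_B(theta); index n is 0-based, i.e. n = (paper's n) - 1 *)
Definition aB N (dA lam th : R) : 'cV[C]_N :=
  \col_(n < N) expi (- (2 * pi * n%:R * dA * sin th / lam)).

(* IRS URA response a_I(az, el), M = M1*M2; index m is 0-based (= paper's m-1) *)
Definition aI M1 M2 (dI lam az el : R) : 'cV[C]_(M1 * M2) :=
  \col_(m < M1 * M2)
    expi (- (2 * pi * dI *
       ((m %/ M1)%N%:R * sin el * cos az + (m %% M1)%N%:R * cos el) / lam)).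

Definition losgain (beta lam d : R) : C :=
  (Num.sqrt beta / d)%:C * expi (- (2 * pi * d / lam)).

Definition Phimx M (th : 'I_M -> R) : 'M[C]_M := diag_mx (\row_m expi (th m)).

Definition natfun T n (f : 'I_n -> T) (d : T) (k : nat) : T :=
  if @insub _ (fun i => i < n)%N _ k is Some i then f i else d.

Fixpoint cascade M N (H0 : 'M[C]_(M, N)) (S : nat -> 'M[C]_M)
    (th : nat -> 'I_M -> R) (w : 'cV[C]_N) (k : nat) : 'cV[C]_M :=
  match k with
  | 0 => Phimx (th 0%N) *m (H0 *m w)
  | k'.+1 => Phimx (th k) *m (S k' *m cascade H0 S th w k')
  end.

(* The end-to-end channel h_{0,J+1} of the K-hop route.
   IRS a_{k+1} <-> index k : 'I_K;  link a_{k+1} -> a_{k+2} <-> index k : 'I_K.-1. *)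
Definition e2e N M1 M2 K (dA dI lam beta : R)
    (th0 : R)                                    (* AoD at BS toward a_1 *)
    (h2az h2el : R)                              (* AoA at a_1 from BS *)
    (s1az s1el s2az s2el : 'I_K.-1 -> R)         (* AoD/AoA of IRS-IRS links *)
    (gaz gel : R)                                (* AoD at a_K toward user *)
    (d0 dK : R) (dS : 'I_K.-1 -> R)
    (th : 'I_K -> 'I_(M1 * M2) -> R) (w : 'cV[C]_N) : C :=
  let H0 := losgain beta lam d0 *: (aI M1 M2 dI lam h2az h2el *m adjmx (aB N dA lam th0)) in
  let S := fun k : 'I_K.-1 =>
     losgain beta lam (dS k) *:
       (aI M1 M2 dI lam (s2az k) (s2el k) *m adjmx (aI M1 M2 dI lam (s1az k) (s1el k))) in
  let grow := losgain beta lam dK *: adjmx (aI M1 M2 dI lam gaz gel) in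
  (grow *m cascade H0 (natfun S 0) (natfun th (fun _ => 0)) w K.-1) 0 0.

Definition theta_opt M1 M2 K (dI lam h2az h2el : R)
    (s1az s1el s2az s2el : 'I_K.-1 -> R) (gaz gel : R)
    : 'I_K -> 'I_(M1 * M2) -> R :=
  fun k m =>
    let x := if (k : nat) == 0%N then aI M1 M2 dI lam h2az h2el
             else natfun (fun j : 'I_K.-1 => aI M1 M2 dI lam (s2az j) (s2el j)) 0 k.-1 in
    let y := if (k.+1 < K)%N
             then natfun (fun j : 'I_K.-1 => aI M1 M2 dI lam (s1az j) (s1el j)) 0 k
             else aI M1 M2 dI lam gaz gel in
    carg (y m 0) - carg (x m 0).

Definition w_opt N K (dA lam th0 d0 dK : R) (dS : 'I_K.-1 -> R) : 'cV[C]_N :=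
  let D := d0 + dK + \sum_(k < K.-1) dS k in
  (expi (2 * pi * D / lam) * ((vnorm (aB N dA lam th0))^-1)%:C) *: aB N dA lam th0.

End Defs.

From HB Require Import structures.
From mathcomp Require Import all_boot all_order all_algebra.
From mathcomp Require Import all_classical all_reals.
From mathcomp Require Import trigo.
From mathcomp Require Import complex.
From mathcomp Require Import ring.
Set Implicit Arguments. Unset Strict Implicit. Unset Printing Implicit Defensive.
Import Order.TTheory GRing.Theory Num.Theory.
Local Open Scope ring_scope.
Local Open Scope complex_scope.
Import Normc.

(* Every link is a rank-one line-of-sight channel, so after each IRS the signal is a
   scalar multiple of that IRS's incoming array response.  The end-to-end channel
   therefore factorises as (product of the link gains) * <a_B, w> * prod_k <y_k, Phi_k x_k>.
   The link gains have modulus kappa; Cauchy-Schwarz bounds |<a_B, w>| by sqrt N; all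
   array responses are unimodular, so the triangle inequality bounds each reflection
   term by M, with equality exactly when Phi_k turns every term conj((y_k)_m) (x_k)_m
   onto the positive real axis.  The matched beamformer attains sqrt N. *)

Section ComplexNorm.
Variable R : realType.
Local Notation C := R[i].
Implicit Types (z : C) (t : R).

Lemma sqnorm_normc z : sqnorm z = normc z ^+ 2.
Proof. by case: z => a b; rewrite /sqnorm /= sqr_sqrtr // addr_ge0 ?sqr_ge0. Qed.

Lemma normc_ge0 z : 0 <= normc z.
Proof. by case: z => a b /=; exact: sqrtr_ge0. Qed.

Lemma normc_expi t : normc (expi t) = 1.
Proof. by rewrite /expi /= cos2Dsin2 sqrtr1. Qed.

Lemma normc_conjc z : normc (conjc z) = normc z.
Proof. by case: z => a b /=; rewrite sqrrN. Qed.

Lemma normc_real t : normc t%:C = `|t|.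
Proof. by rewrite /= expr0n /= addr0 sqrtr_sqr. Qed.

Lemma normc_sum I (r : seq I) (P : pred I) (F : I -> C) :
  normc (\sum_(i <- r | P i) F i) <= \sum_(i <- r | P i) normc (F i).
Proof.
elim/big_rec2: _ => [|i s t _ IHt]; first by rewrite normc0.
by apply: le_trans (le_normcD _ _) _; rewrite lerD2l.
Qed.

Lemma normc_prod I (r : seq I) (P : pred I) (F : I -> C) :
  normc (\prod_(i <- r | P i) F i) = \prod_(i <- r | P i) normc (F i).
Proof. exact: (big_morph (@normc R) (@normcM R) (@normc1 R)). Qed.

Lemma expiB t1 t2 : expi (t1 - t2) = expi t1 * conjc (expi t2).
Proof.
rewrite /expi /= cosB sinB; apply/eqP; rewrite eq_complex /=.
by apply/andP; split; apply/eqP; ring.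
Qed.

Lemma mulcJ_normc z : z * conjc z = (normc z ^+ 2)%:C.
Proof.
rewrite -sqnorm_normc; case: z => a b; rewrite /sqnorm /=; apply/eqP.
by rewrite eq_complex /=; apply/andP; split; apply/eqP; ring.
Qed.

Lemma expi_carg z : normc z = 1 -> expi (carg z) = z.
Proof.
case: z => a b /= z1.
have ab1 : a ^+ 2 + b ^+ 2 = 1.
  by rewrite -[LHS]sqr_sqrtr ?z1 ?expr1n // addr_ge0 ?sqr_ge0.
have a_itv : -1 <= a <= 1.
  rewrite -ler_norml -(@ler_pXn2r _ 2) ?nnegrE // real_normK ?num_real //.
  by rewrite expr1n -ab1 lerDl sqr_ge0.
have sin_acos_a : sin (acos a) = `|b| by rewrite sin_acos // -ab1 addrC addKr sqrtr_sqr.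
rewrite /carg /sqnorm /= z1 divr1 /expi.
case: ifP => b_ge0; rewrite ?cosN ?sinN acosK ?in_itv //= sin_acos_a.
  by rewrite ger0_norm.
by rewrite ltr0_norm ?opprK // ltNge b_ge0.
Qed.

(* Expanding [0 <= sum_i (n x_i - sum_j x_j)^2] gives [n (n Q - S^2) >= 0]. *)
Lemma sqr_sum_le n (x : 'I_n -> R) :
  (\sum_(i < n) x i) ^+ 2 <= n%:R * \sum_(i < n) x i ^+ 2.
Proof.
set S := \sum_(i < n) x i; set Q := \sum_(i < n) x i ^+ 2.
case: n x @S @Q => [|n] x S Q; first by rewrite /S /Q !big_ord0 expr0n /= mul0r.
have : 0 <= \sum_(i < n.+1) (x i * n.+1%:R - S) ^+ 2 by apply: sumr_ge0 => i _; exact: sqr_ge0.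
have -> : \sum_(i < n.+1) (x i * n.+1%:R - S) ^+ 2 = n.+1%:R * (n.+1%:R * Q - S ^+ 2).
  rewrite (eq_bigr (fun i => n.+1%:R ^+ 2 * x i ^+ 2 + (- (2 * n.+1%:R * S) * x i + S ^+ 2)));
    last by move=> i _; ring.
  by rewrite !big_split /= -!mulr_sumr sumr_const card_ord -/S -/Q mulr_natl; ring.
by rewrite pmulr_rge0 ?ltr0n // subr_ge0.
Qed.

End ComplexNorm.

Section UnimodularVectors.
Variable R : realType.
Local Notation C := R[i].

Definition unimodular n (v : 'cV[C]_n) := forall i, normc (v i 0) = 1.

Definition dot n (y x : 'cV[C]_n) : C := (adjmx y *m x) 0 0.

Lemma dotE n (y x : 'cV[C]_n) : dot y x = \sum_(i < n) conjc (y i 0) * x i 0.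
Proof. by rewrite /dot !mxE; apply: eq_bigr => i _; rewrite !mxE. Qed.

Lemma dotZ n (y x : 'cV[C]_n) c : dot y (c *: x) = c * dot y x.
Proof. by rewrite /dot -scalemxAr mxE. Qed.

Lemma mul_rank1_mx m n (u : 'cV[C]_m) (v x : 'cV[C]_n) :
  (u *m adjmx v) *m x = dot v x *: u.
Proof.
apply/matrixP => i j; rewrite (ord1 j) !mxE dotE mulr_suml.
by apply: eq_bigr => l _; rewrite !mxE big_ord1 !mxE; ring.
Qed.

Lemma mul_Phimx n (th : 'I_n -> R) (x : 'cV[C]_n) :
  Phimx th *m x = \col_i (expi (th i) * x i 0).
Proof. by apply/matrixP => i j; rewrite (ord1 j) /Phimx mul_diag_mx !mxE. Qed.

Lemma vnormZ n c (v : 'cV[C]_n) : vnorm (c *: v) = normc c * vnorm v.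
Proof.
rewrite /vnorm -[normc c]ger0_norm ?normc_ge0 // -sqrtr_sqr -sqrtrM ?sqr_ge0 //.
rewrite mulr_sumr; congr Num.sqrt; apply: eq_bigr => i _.
by rewrite mxE !sqnorm_normc normcM exprMn.
Qed.

Section Unimodular.
Variables (n : nat) (b : 'cV[C]_n).
Hypothesis b_unimodular : unimodular b.

Lemma vnorm_unimodular : vnorm b = Num.sqrt n%:R.
Proof.
rewrite /vnorm -[n in n%:R]card_ord -sumr_const; congr Num.sqrt.
by apply: eq_bigr => i _; rewrite sqnorm_normc b_unimodular expr1n.
Qed.

Lemma dot_unimodular_self : dot b b = n%:R.
Proof.
rewrite dotE -[n in n%:R]card_ord -sumr_const.
by apply: eq_bigr => i _; rewrite mulrC mulcJ_normc b_unimodular expr1n.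
Qed.

Lemma normc_dot_le w : normc (dot b w) <= Num.sqrt n%:R * vnorm w.
Proof.
rewrite dotE; apply: le_trans (normc_sum _ _ _) _.
under eq_bigr => i _ do rewrite normcM normc_conjc b_unimodular mul1r.
have sum_ge0 : 0 <= \sum_(i < n) normc (w i 0) by apply: sumr_ge0 => i _; exact: normc_ge0.
rewrite /vnorm -sqrtrM ?ler0n // -(ger0_norm sum_ge0) -sqrtr_sqr ler_wsqrtr //.
under [X in _ <= _ * X]eq_bigr => i _ do rewrite sqnorm_normc.
exact: sqr_sum_le.
Qed.

Hypothesis n_gt0 : (0 < n)%N.

Lemma vnorm_normalized u : normc u = 1 -> vnorm ((u * (vnorm b)^-1%:C) *: b) = 1.
Proof.
move=> u1; have sqrt_gt0 : 0 < Num.sqrt n%:R :> R by rewrite sqrtr_gt0 ltr0n.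
rewrite vnormZ normcM u1 normc_real vnorm_unimodular mul1r.
by rewrite ger0_norm ?invr_ge0 ?ltW // mulVf ?gt_eqF.
Qed.

Lemma normc_dot_normalized u :
  normc u = 1 -> normc (dot b ((u * (vnorm b)^-1%:C) *: b)) = Num.sqrt n%:R.
Proof.
move=> u1; have sqrt_gt0 : 0 < Num.sqrt n%:R :> R by rewrite sqrtr_gt0 ltr0n.
rewrite dotZ dot_unimodular_self !normcM u1 normc_real vnorm_unimodular mul1r.
rewrite ger0_norm ?invr_ge0 ?ltW // normcMn normc1.
set s := Num.sqrt n%:R in sqrt_gt0 *.
have -> : n%:R = s ^+ 2 :> R by rewrite sqr_sqrtr ?ler0n.
by rewrite expr2 mulKf ?gt_eqF.
Qed.

End Unimodular.

Section Reflection.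
Variables (n : nat) (y x : 'cV[C]_n).
Hypotheses (y_unimodular : unimodular y) (x_unimodular : unimodular x).

Lemma normc_dot_Phimx_le th : normc (dot y (Phimx th *m x)) <= n%:R.
Proof.
rewrite dotE mul_Phimx -[n in n%:R]card_ord -sumr_const.
apply: le_trans (normc_sum _ _ _) (ler_sum _ _) => i _.
by rewrite !mxE !normcM normc_conjc y_unimodular x_unimodular normc_expi !mul1r.
Qed.

Lemma dot_Phimx_aligned th :
  (forall i, th i = carg (y i 0) - carg (x i 0)) -> dot y (Phimx th *m x) = n%:R.
Proof.
move=> th_aligned; rewrite dotE mul_Phimx -[n in n%:R]card_ord -sumr_const.
apply: eq_bigr => i _; rewrite !mxE th_aligned expiB !expi_carg //.
have -> : conjc (y i 0) * (y i 0 * conjc (x i 0) * x i 0) =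
          (y i 0 * conjc (y i 0)) * (x i 0 * conjc (x i 0)) by ring.
by rewrite !mulcJ_normc y_unimodular x_unimodular expr1n mulr1.
Qed.

End Reflection.

End UnimodularVectors.

Lemma prodr_const_ord (S : pzSemiRingType) n (x : S) : \prod_(i < n) x = x ^+ n.
Proof. by rewrite prodr_const card_ord. Qed.

Lemma natfunE T n (f : 'I_n -> T) d (i : 'I_n) : natfun f d i = f i.
Proof. by rewrite /natfun valK. Qed.

Lemma natfunS T n {f : 'I_n -> T} {d : T} k (k_lt_n : (k < n)%N) :
  natfun f d k = f (Ordinal k_lt_n).
Proof. by rewrite /natfun insubT. Qed.

Lemma natfunN T n (f : 'I_n -> T) d k : (n <= k)%N -> natfun f d k = d.
Proof. by move=> n_le_k; rewrite /natfun insubN // -leqNgt. Qed.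

Section Cascade.
Variable R : realType.
Local Notation C := R[i].
Variables (M N : nat) (g0 : C) (x0 : 'cV[C]_M) (b : 'cV[C]_N)
  (gs : nat -> C) (xs ys : nat -> 'cV[C]_M) (th : nat -> 'I_M -> R) (w : 'cV[C]_N).

Definition incoming k := if k is k'.+1 then xs k' else x0.

Definition reflection_gain k := dot (ys k) (Phimx (th k) *m incoming k).

Lemma cascade_rank1 (H0 : 'M[C]_(M, N)) (S : nat -> 'M[C]_M) :
  H0 = g0 *: (x0 *m adjmx b) -> (forall k, S k = gs k *: (xs k *m adjmx (ys k))) ->
  forall k, cascade H0 S th w k =
    (g0 * dot b w * \prod_(j < k) (gs j * reflection_gain j)) *: (Phimx (th k) *m incoming k).
Proof.
move=> -> S_rank1; elim => [|k IHk] /=.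
  by rewrite big_ord0 mulr1 -scalemxAl mul_rank1_mx scalerA -scalemxAr.
rewrite IHk S_rank1 -scalemxAl -scalemxAr mul_rank1_mx dotZ -scalemxAr scalerA big_ord_recr /=.
by congr (_ *: _); rewrite /reflection_gain; ring.
Qed.

End Cascade.

Section LineOfSight.
Variable R : realType.

Lemma aI_unimodular M1 M2 (dI lam az el : R) : unimodular (aI M1 M2 dI lam az el).
Proof. by move=> i; rewrite mxE normc_expi. Qed.

Lemma aB_unimodular N (dA lam th : R) : unimodular (aB N dA lam th).
Proof. by move=> i; rewrite mxE normc_expi. Qed.

Lemma normc_losgain (beta lam d : R) :
  0 <= beta -> 0 < d -> normc (losgain beta lam d) = Num.sqrt beta / d.
Proof.
move=> beta_ge0 d_gt0; rewrite /losgain normcM normc_expi mulr1 normc_real.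
by rewrite ger0_norm // divr_ge0 ?sqrtr_ge0 ?ltW.
Qed.

End LineOfSight.

Section Route.
Variable R : realType.
Local Notation C := R[i].
Variables (N M1 M2 K : nat) (dA dI lam beta : R)
  (th0 h2az h2el : R) (s1az s1el s2az s2el : 'I_K.-1 -> R) (gaz gel : R)
  (d0 dK : R) (dS : 'I_K.-1 -> R).
Hypotheses (K_gt0 : (0 < K)%N) (beta_ge0 : 0 <= beta)
  (d0_gt0 : 0 < d0) (dK_gt0 : 0 < dK) (dS_gt0 : forall k, 0 < dS k).

Local Notation aIRS := (aI M1 M2 dI lam).
Local Notation bs_response := (aB N dA lam th0).
Local Notation h :=
  (@e2e R N M1 M2 K dA dI lam beta th0 h2az h2el s1az s1el s2az s2el gaz gel d0 dK dS).
Local Notation kappa := (Num.sqrt beta ^+ K.+1 / (d0 * dK * \prod_(k < K.-1) dS k)).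

(* [in_vec k] and [out_vec k] are the paper's x_{k+1} and y_{k+1}. *)
Definition in_vec : nat -> 'cV[C]_(M1 * M2) :=
  incoming (aIRS h2az h2el) (natfun (fun j => aIRS (s2az j) (s2el j)) 0).

Definition out_vec (k : nat) : 'cV[C]_(M1 * M2) :=
  if (k.+1 < K)%N then natfun (fun j => aIRS (s1az j) (s1el j)) 0 k else aIRS gaz gel.

Definition irs_gain (th : 'I_K -> 'I_(M1 * M2) -> R) : nat -> C :=
  reflection_gain (aIRS h2az h2el) (natfun (fun j => aIRS (s2az j) (s2el j)) 0) out_vec
    (natfun th (fun _ => 0)).

Definition route_gain : C :=
  losgain beta lam dK * losgain beta lam d0 * \prod_(j < K.-1) losgain beta lam (dS j).

Lemma in_vec_unimodular k : (k < K)%N -> unimodular (in_vec k).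
Proof.
case: k => [|k] k_lt; first exact: aI_unimodular.
have k_lt' : (k < K.-1)%N by rewrite ltn_predRL.
by rewrite /in_vec /= (natfunS k_lt'); exact: aI_unimodular.
Qed.

Lemma out_vec_unimodular k : unimodular (out_vec k).
Proof.
rewrite /out_vec; case: ifP => [k_lt | _]; last exact: aI_unimodular.
have k_lt' : (k < K.-1)%N by rewrite ltn_predRL.
by rewrite (natfunS k_lt'); exact: aI_unimodular.
Qed.

Lemma e2e_factor th w :
  h th w = route_gain * dot bs_response w * \prod_(j < K) irs_gain th j.
Proof.
rewrite /e2e (cascade_rank1 (gs := natfun (fun j => losgain beta lam (dS j)) 0)
  (xs := natfun (fun j => aIRS (s2az j) (s2el j)) 0) (ys := out_vec) _ _ erefl); last first.
  move=> k; case: (ltnP k K.-1) => [k_lt | k_ge]; last by rewrite !natfunN // scale0r.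
  by rewrite /out_vec -ltn_predRL k_lt !(natfunS k_lt).
have last_hop : out_vec K.-1 = aIRS gaz gel by rewrite /out_vec prednK // ltnn.
rewrite -scalemxAl mxE -scalemxAr mxE -last_hop.
have -> : \prod_(j < K) irs_gain th j = \prod_(j < K.-1.+1) irs_gain th j by rewrite prednK.
rewrite big_ord_recr big_split /= /route_gain.
under eq_bigr => j _ do rewrite natfunE.
by rewrite /irs_gain /reflection_gain /dot; ring.
Qed.

Lemma normc_route_gain : normc route_gain = kappa.
Proof.
rewrite /route_gain 2!normcM normc_prod.
rewrite (normc_losgain _ beta_ge0 dK_gt0) (normc_losgain _ beta_ge0 d0_gt0).
under eq_bigr => j _ do rewrite (normc_losgain _ beta_ge0 (dS_gt0 j)).
rewrite big_split /= prodr_const card_ord prodfV.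
have -> : Num.sqrt beta ^+ K.+1 = Num.sqrt beta ^+ K.-1.+2 by rewrite prednK.
have P_gt0 : 0 < \prod_(k < K.-1) dS k by apply: prodr_gt0.
by rewrite !exprS; field; rewrite !gt_eqF.
Qed.

Lemma normc_e2e th w :
  normc (h th w) = kappa * normc (dot bs_response w) * \prod_(j < K) normc (irs_gain th j).
Proof. by rewrite e2e_factor 2!normcM normc_route_gain normc_prod. Qed.

Lemma normc_irs_gain_le th j : (j < K)%N -> normc (irs_gain th j) <= (M1 * M2)%N%:R.
Proof.
move=> j_lt; apply: normc_dot_Phimx_le; first exact: out_vec_unimodular.
exact: in_vec_unimodular.
Qed.

Lemma normc_e2e_le th w :
  vnorm w = 1 -> normc (h th w) <= kappa * Num.sqrt N%:R * (M1 * M2)%N%:R ^+ K.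
Proof.
move=> w1; rewrite normc_e2e.
have kappa_ge0 : 0 <= kappa.
  by rewrite divr_ge0 ?exprn_ge0 ?sqrtr_ge0 // ltW // !mulr_gt0 // prodr_gt0.
apply: ler_pM.
- by rewrite mulr_ge0 ?normc_ge0.
- by rewrite prodr_ge0 // => j _; exact: normc_ge0.
- apply: ler_wpM2l => //.
  by have := normc_dot_le (@aB_unimodular R N dA lam th0) w; rewrite w1 mulr1.
rewrite -prodr_const_ord.
by apply: ler_prod => j _; rewrite normc_ge0 normc_irs_gain_le.
Qed.

Local Notation theta :=
  (@theta_opt R M1 M2 K dI lam h2az h2el s1az s1el s2az s2el gaz gel).

Lemma theta_opt_aligned j m : (j < K)%N ->
  natfun theta (fun _ => 0) j m = carg (out_vec j m 0) - carg (in_vec j m 0).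
Proof. by move=> j_lt; rewrite (natfunS j_lt) /theta_opt; case: j j_lt. Qed.

Lemma irs_gain_opt j : (j < K)%N -> irs_gain theta j = (M1 * M2)%N%:R.
Proof.
move=> j_lt; apply: dot_Phimx_aligned; first exact: out_vec_unimodular.
  exact: in_vec_unimodular.
by move=> m; exact: theta_opt_aligned.
Qed.

Hypothesis N_gt0 : (0 < N)%N.
Local Notation w_bs := (@w_opt R N K dA lam th0 d0 dK dS).

Lemma vnorm_w_opt : vnorm w_bs = 1.
Proof. by apply: vnorm_normalized; [exact: aB_unimodular | | exact: normc_expi]. Qed.

Lemma normc_e2e_opt :
  normc (h theta w_bs) = kappa * Num.sqrt N%:R * (M1 * M2)%N%:R ^+ K.
Proof.
rewrite normc_e2e normc_dot_normalized ?normc_expi //; last exact: aB_unimodular.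
rewrite -[_ ^+ K]prodr_const_ord; congr (_ * _).
by apply: eq_bigr => j _; rewrite irs_gain_opt // normcMn normc1.
Qed.

End Route.

Local Close Scope complex_scope.
Unset Implicit Arguments.

Theorem mainTheorem1 (R : realType) (N M1 M2 K : nat) (dA dI lam beta : R)
    (th0 h2az h2el : R) (s1az s1el s2az s2el : 'I_K.-1 -> R) (gaz gel : R)
    (d0 dK : R) (dS : 'I_K.-1 -> R) :
  (1 <= N)%N -> (1 <= M1)%N -> (1 <= M2)%N -> (1 <= K)%N ->
  0 < dA -> 0 < dI -> 0 < lam -> 0 < beta < 1 ->
  0 < d0 -> 0 < dK -> (forall k, 0 < dS k) ->
  let M : R := (M1 * M2)%N%:R in
  let kappa : R := Num.sqrt beta ^+ K.+1 / (d0 * dK * \prod_(k < K.-1) dS k) in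
  let V : R := M ^+ (2 * K) * N%:R * beta ^+ K.+1
               / (d0 ^+ 2 * dK ^+ 2 * \prod_(k < K.-1) dS k ^+ 2) in
  let h := @e2e R N M1 M2 K dA dI lam beta th0 h2az h2el s1az s1el s2az s2el gaz gel d0 dK dS in
  V = M ^+ (2 * K) * N%:R * kappa ^+ 2 /\
  (forall (th : 'I_K -> 'I_(M1 * M2) -> R) (w : 'cV[R[i]]_N),
      vnorm w = 1 -> sqnorm (h th w) <= V) /\
  vnorm (@w_opt R N K dA lam th0 d0 dK dS) = 1 /\
  sqnorm (h (@theta_opt R M1 M2 K dI lam h2az h2el s1az s1el s2az s2el gaz gel)
            (@w_opt R N K dA lam th0 d0 dK dS)) = V.
Proof.
move=> N_gt0 _ _ K_gt0 _ _ _ /andP[/ltW beta_ge0 _] d0_gt0 dK_gt0 dS_gt0 M kappa V h.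
have V_kappa : V = M ^+ (2 * K) * N%:R * kappa ^+ 2.
  by rewrite /V /kappa expr_div_n exprAC sqr_sqrtr // !exprMn prodrXl !mulrA.
have sqr_gain (k m : R) : (k * Num.sqrt N%:R * m ^+ K) ^+ 2 = m ^+ (2 * K) * N%:R * k ^+ 2.
  by rewrite !exprMn sqr_sqrtr ?ler0n // -exprM mulnC; ring.
have V_opt : V = (kappa * Num.sqrt N%:R * M ^+ K) ^+ 2 by rewrite V_kappa sqr_gain.
split=> //; split.
  move=> th w w1; rewrite sqnorm_normc V_opt !expr2.
  by apply: ler_pM; rewrite ?normc_ge0 ?normc_e2e_le.
split; first exact: vnorm_w_opt.
by rewrite sqnorm_normc normc_e2e_opt ?V_opt.
Qed.
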